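(* Let $A$ be a $2\times n$ array with pairwise distinct entries and let $k\ge 1$. The DAG $D^k_A$ has at most $6kn$ nodes.
   Context: For a $2\times n$ array $A$ with distinct entries from a total order and $1\le a\le b\le n$, let Top-$k([a,b])$ denote the set of positions of the $k$ largest values in $A[1..2][a..b]$ (rows 1 and 2, columns $a..b$). The DAG $D^k_A$ has nodes labelled by intervals $[a,b]$, $1\le a\le b\le n$, with nodes identified by their labels, defined inductively: the root is $[1,n]$; a node $[a,b]$ is a leaf (has no children) if $2(b-a+1)\le k$; otherwise, letting $a'$ and $b'$ ($a\le a'\le b'\le b$) be the smallest and largest column indices among the positions in Top-$k([a,b])$, the node $[a,b]$ has left child $[a,b'-1]$ if $a<b'$ and right child $[a'+1,b]$ if $a'<b$. The nodes of $D^k_A$ are exactly those reachable from the root. *)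

From HB Require Import structures.
From mathcomp Require Import all_boot all_order.
Set Implicit Arguments. Unset Strict Implicit. Unset Printing Implicit Defensive.
Import Order.TTheory.

(* A 2 x n array is a function A : nat -> nat -> T, where A r c is the entry
   in row r (r = 1 or 2) and column c (1 <= c <= n); values outside this
   range are irrelevant. *)

Section DAG.
Context {disp : Order.disp_t} {T : orderType disp}.
Variables (n k : nat) (A : nat -> nat -> T).

Definition valid_pos (r c : nat) : bool := (1 <= r <= 2) && (1 <= c <= n).

Definition distinct_entries : Prop :=
  forall r c r' c', valid_pos r c -> valid_pos r' c' ->
    A r c = A r' c' -> r = r' /\ c = c'.

Definition nlarger (a b r c : nat) : nat :=
  \sum_(1 <= r' < 3) \sum_(a <= c' < b.+1) ((A r c < A r' c')%O : nat).

(* (r,c) belongs to Top-k([a,b]): it is in the subarray and fewer than k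
   entries of the subarray are larger (with distinct entries this is exactly
   the set of positions of the k largest values). *)
Definition inTopk (a b r c : nat) : bool :=
  [&& 1 <= r <= 2, a <= c <= b & nlarger a b r c < k].

Definition colTop (a b c : nat) : bool := inTopk a b 1 c || inTopk a b 2 c.

Definition topCols (a b : nat) : seq nat := [seq c <- iota a (b - a).+1 | colTop a b c].

Definition aprime (a b : nat) : nat := head 0 (topCols a b).
Definition bprime (a b : nat) : nat := last 0 (topCols a b).

Definition label := ('I_n.+1 * 'I_n.+1)%type.

Definition child (x y : label) : bool :=
  let a := val x.1 in let b := val x.2 in
  [&& a <= b, k < 2 * (b - a + 1) &
    ((a < bprime a b) && (val y.1 == a) && (val y.2 == (bprime a b).-1))
    || ((aprime a b < b) && (val y.1 == (aprime a b).+1) && (val y.2 == b))].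

Definition root_label : label := (inord 1, inord n).

Definition DAG_nodes : {set label} := [set x | connect child root_label x].

End DAG.

(* Call [a,b] flanked if, unless a = 1, column a-1 carries a Top-k position of
   [a-1,b], and, unless b = n, column b+1 carries a Top-k position of [a,b+1].
   The root is flanked, and flankedness passes to children because a Top-k
   position stays Top-k in every subinterval containing it, and a' and b' are
   Top-k columns. For a flanked [a,b] with 1 < a and b < n, compare the flanking
   entries x = A[r][a-1] and y = A[s][b+1]: if x < y, then x is Top-k in [a-1,b]
   but drops a rank when column b+1 is added; otherwise y is Top-k in [a,b+1] and
   drops a rank when column a-1 is added. The rank of a fixed position only grows
   as its interval grows, so it can drop while still among the k largest at most
   k times. For each of the 2n choices of flanking row and column, this charges
   at most k nodes in each of the two cases; with the at most 2n nodes having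
   a = 1 or b = n, this gives at most 2n + 4kn <= 6kn nodes. *)

From HB Require Import structures.
From mathcomp Require Import all_boot all_order.
From mathcomp Require Import zify.
Set Implicit Arguments. Unset Strict Implicit. Unset Printing Implicit Defensive.
Import Order.TTheory.

Lemma leq_sum_subinterval (F : nat -> nat) m1 n1 m2 n2 : m2 <= m1 -> n1 <= n2 ->
  \sum_(m1 <= i < n1) F i <= \sum_(m2 <= i < n2) F i.
Proof.
move=> hm hn; case: (leqP m1 n1) => h1; last by rewrite big_geq ?(ltnW h1).
rewrite (big_cat_nat hm (leq_trans h1 hn)) (big_cat_nat h1 hn) /=.
by rewrite addnCA leq_addr.
Qed.

Lemma leq_term_sum_nat (F : nat -> nat) m N i : m <= i < N -> F i <= \sum_(m <= j < N) F j.
Proof. by case/andP=> hm hN; rewrite -(@big_nat1 _ 0 addn i F) leq_sum_subinterval. Qed.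

Lemma sum_rises_below (f : nat -> nat) K m N : (forall i, f i <= f i.+1) ->
  \sum_(m <= i < N) ((f i < K) && (f i < f i.+1)) <= K.
Proof.
(* Every counted step raises [minn K (f i)], so the count telescopes. *)
move=> hf; pose g i := minn K (f i).
have g_homo : {homo g : x y / x <= y}.
  by apply: homo_leq => [//|x y z|i]; [exact: leq_trans | have := hf i; rewrite /g; lia].
apply: (@leq_trans (\sum_(m <= i < N) (g i.+1 - g i))).
  apply: leq_sum => i _; rewrite /g.
  by have := hf i; case: andP => [[]|]; lia.
by rewrite telescope_sumn // /g; lia.
Qed.

Lemma sum_falls_below (f : nat -> nat) K m N : (forall i, f i.+1 <= f i) ->
  \sum_(m <= i < N) ((f i < K) && (f i < f i.-1)) <= K.
Proof.
move=> hf; rewrite big_nat_rev /=.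
under eq_bigr do rewrite -subnS.
apply: (sum_rises_below (f := fun i => f (m + N - i.+1))) => i.
by rewrite [_ - i.+2]subnS; case: (_ - i.+1) => //= j; exact: hf.
Qed.

Lemma sum_nat_eq_le1 m N j : \sum_(m <= i < N) (i == j) <= 1.
Proof.
have -> : \sum_(m <= i < N) (i == j) = \sum_(m <= i < N | i == j) 1.
  by rewrite [RHS]big_mkcond.
by rewrite sum1_count count_uniq_mem ?iota_uniq ?leq_b1.
Qed.

Lemma leq_sum_const_nat m N K (F : nat -> nat) : (forall i, m <= i < N -> F i <= K) ->
  \sum_(m <= i < N) F i <= (N - m) * K.
Proof.
move=> hF; rewrite -sum_nat_const_nat big_seq_cond [X in _ <= X]big_seq_cond.
by apply: leq_sum => i /andP[+ _]; rewrite mem_index_iota; exact: hF.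
Qed.

Section TopkDAG.
Context {disp : Order.disp_t} {T : orderType disp}.
Variables (n k : nat) (A : nat -> nat -> T).

Lemma nlarger_mono a1 b1 a2 b2 r c : a2 <= a1 -> b1 <= b2 ->
  nlarger A a1 b1 r c <= nlarger A a2 b2 r c.
Proof. by move=> ha hb; apply: leq_sum => r' _; apply: leq_sum_subinterval. Qed.

Lemma nlargerSr a b r c : a <= b.+1 ->
  nlarger A a b.+1 r c = nlarger A a b r c + \sum_(1 <= r' < 3) (A r c < A r' b.+1)%O.
Proof. by move=> hab; rewrite /nlarger -big_split; apply: eq_bigr => r' _; rewrite big_nat_recr. Qed.

Lemma nlargerSl a b r c : a <= b ->
  nlarger A a b r c = nlarger A a.+1 b r c + \sum_(1 <= r' < 3) (A r c < A r' a)%O.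
Proof. by move=> hab; rewrite /nlarger -big_split; apply: eq_bigr => r' _; rewrite big_ltn // addnC. Qed.

Lemma nlarger_ltSr a b r c s : a <= b.+1 -> 1 <= s <= 2 -> (A r c < A s b.+1)%O ->
  nlarger A a b r c < nlarger A a b.+1 r c.
Proof.
move=> hab hs hlt; rewrite nlargerSr // -addn1 leq_add2l.
by apply: leq_trans _ (@leq_term_sum_nat _ 1 3 s hs); rewrite /= hlt.
Qed.

Lemma nlarger_ltSl a b r c s : a <= b -> 1 <= s <= 2 -> (A r c < A s a)%O ->
  nlarger A a.+1 b r c < nlarger A a b r c.
Proof.
move=> hab hs hlt; rewrite (nlargerSl _ _ hab) -addn1 leq_add2l.
by apply: leq_trans _ (@leq_term_sum_nat _ 1 3 s hs); rewrite /= hlt.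
Qed.

Lemma inTopk_sub a1 b1 a2 b2 r c : inTopk k A a1 b1 r c ->
  a1 <= a2 <= c -> c <= b2 <= b1 -> inTopk k A a2 b2 r c.
Proof.
case/and3P=> hr _ hlt /andP[ha hc1] /andP[hc2 hb]; rewrite /inTopk hr hc1 hc2.
exact: leq_ltn_trans (nlarger_mono _ _ ha hb) hlt.
Qed.

Lemma colTopP a b c : reflect (exists r, inTopk k A a b r c) (colTop k A a b c).
Proof.
apply: (iffP orP) => [[] h|[r h]]; [by exists 1 | by exists 2 |].
by have /andP[/andP[r1 r2] _] := h; case: r r1 r2 h => [|[|[|r]]] // _ _ h; [left|right].
Qed.

Lemma colTop_sub a1 b1 a2 b2 c : colTop k A a1 b1 c ->
  a1 <= a2 <= c -> c <= b2 <= b1 -> colTop k A a2 b2 c.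
Proof. by move=> /colTopP[r h] ha hb; apply/colTopP; exists r; exact: inTopk_sub h ha hb. Qed.

Lemma mem_topCols a b c : (c \in topCols k A a b) = colTop k A a b c.
Proof.
rewrite mem_filter andb_idr // => /colTopP[r /and3P[_ /andP[ha hb] _]].
by rewrite mem_iota; lia.
Qed.

Lemma exists_colTop a b : 0 < k -> a <= b -> exists c, colTop k A a b c.
Proof.
move=> hk hab; pose F (q : 'I_2 * 'I_(b - a).+1) := A q.1.+1 (a + q.2).
have [p _ pmax] := @arg_maxP _ _ _ (ord0, ord0) xpredT F isT.
have hp : a + p.2 <= b by rewrite -leq_subRL // -ltnS.
exists (a + p.2); apply/colTopP; exists p.1.+1.
rewrite /inTopk (ltn_ord p.1) leq_addr hp /=.
suff -> : nlarger A a b p.1.+1 (a + p.2) = 0 by [].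
rewrite /nlarger big1_seq // => r /andP[_ hr]; rewrite big1_seq // => c /andP[_ hc].
move: hr hc; rewrite !mem_index_iota => hr hc.
have := pmax (inord r.-1, inord (c - a)) isT; rewrite /F /= !inordK; [|lia..].
have -> : r.-1.+1 = r by lia.
have -> : a + (c - a) = c by lia.
by rewrite leNgt => /negbTE ->.
Qed.

Lemma colTop_aprime a b : 0 < k -> a <= b -> colTop k A a b (aprime k A a b).
Proof.
move=> hk hab; have [c] := exists_colTop hk hab.
by rewrite -!mem_topCols /aprime; case: topCols => // x s _; exact: mem_head.
Qed.

Lemma colTop_bprime a b : 0 < k -> a <= b -> colTop k A a b (bprime k A a b).
Proof.
move=> hk hab; have [c] := exists_colTop hk hab.
by rewrite -!mem_topCols /bprime; case: topCols => // x s _; exact: mem_last.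
Qed.

Definition flanked a b : bool :=
  [&& 1 <= a <= b, b <= n, (a == 1) || colTop k A a.-1 b a.-1
    & (b == n) || colTop k A a b.+1 b.+1].

Lemma flanked_child (x y : label n) : 0 < k ->
  child k A x y -> flanked (val x.1) (val x.2) -> flanked (val y.1) (val y.2).
Proof.
rewrite /child /flanked; set a := val x.1; set b := val x.2.
move=> hk /and3P[hab _ /orP[]/andP[]/andP[hlt /eqP-> /eqP->]] /and4P[/andP[ha _] hbn hL hR].
- have := colTop_bprime hk hab; set b' := bprime k A a b => hb'.
  have /colTopP[r /and3P[_ /andP[_ hb'b] _]] := hb'.
  rewrite prednK; last lia.
  apply/and4P; split; try lia.
  + by case/orP: hL => [->//|hL]; rewrite (colTop_sub hL) ?orbT //; lia.
  + by rewrite (colTop_sub hb') ?orbT //; lia.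
- have := colTop_aprime hk hab; set a' := aprime k A a b => ha'.
  have /colTopP[r /and3P[_ /andP[haa' _] _]] := ha'.
  rewrite hlt hbn /= (colTop_sub ha') ?orbT //=; try lia.
  by case/orP: hR => [->//|hR]; rewrite (colTop_sub hR) ?orbT //; lia.
Qed.

Lemma flanked_DAG_nodes (x : label n) : 0 < n -> 0 < k ->
  x \in DAG_nodes n k A -> flanked (val x.1) (val x.2).
Proof.
move=> hn hk; rewrite inE => /connectP[p hp ->] {x}.
have : flanked (val (root_label n).1) (val (root_label n).2).
  by rewrite /flanked /= !inordK ?eqxx ?orbT ?leqnn ?andbT.
elim: p (root_label n) hp => [|y p IH] x //= /andP[hxy hp] hx.
exact: IH hp (flanked_child hk hxy hx).
Qed.

Definition topk_pushed_right a b r c : bool :=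
  (nlarger A a b r c < k) && (nlarger A a b r c < nlarger A a b.+1 r c).

Definition topk_pushed_left a b r c : bool :=
  (nlarger A a b r c < k) && (nlarger A a b r c < nlarger A a.-1 b r c).

Lemma sum_topk_pushed_right a r c m N : \sum_(m <= b < N) topk_pushed_right a b r c <= k.
Proof. by apply: sum_rises_below => b; apply: nlarger_mono. Qed.

Lemma sum_topk_pushed_left b r c m N : \sum_(m <= a < N) topk_pushed_left a b r c <= k.
Proof. by apply: sum_falls_below => a; apply: nlarger_mono. Qed.

Lemma flanked_le a b : distinct_entries n A ->
  flanked a b <= (a == 1) + (b == n)
    + \sum_(1 <= r < 3) topk_pushed_right a.-1 b r a.-1
    + \sum_(1 <= s < 3) topk_pushed_left a b.+1 s b.+1.
Proof.
move=> hd; case flab: (flanked a b) => //.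
move: flab => /and4P[/andP[ha hab] hbn hL hR].
have [->|a1] := eqVneq a 1; first lia.
have [->|bn] := eqVneq b n; first lia.
move: hL hR; rewrite (negbTE a1) (negbTE bn) /= => /colTopP[r hr] /colTopP[s hs].
have /and3P[hr12 _ hrk] := hr; have /and3P[hs12 _ hsk] := hs.
case: (ltgtP (A r a.-1) (A s b.+1)) => [lt_rs|lt_sr|eq_rs].
- have pushed : topk_pushed_right a.-1 b r a.-1.
    by rewrite /topk_pushed_right hrk (nlarger_ltSr _ hs12 lt_rs) //; lia.
  have /= := @leq_term_sum_nat (topk_pushed_right a.-1 b ^~ a.-1) 1 3 r hr12.
  rewrite pushed; lia.
- have pushed : topk_pushed_left a b.+1 s b.+1.
    rewrite /topk_pushed_left hsk -{1}(prednK ha) (nlarger_ltSl _ hr12 lt_sr) //; lia.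
  have /= := @leq_term_sum_nat (topk_pushed_left a b.+1 ^~ b.+1) 1 3 s hs12.
  rewrite pushed; lia.
- have vr : valid_pos n r a.-1 by rewrite /valid_pos hr12 /=; lia.
  have vs : valid_pos n s b.+1 by rewrite /valid_pos hs12 /=; lia.
  by have [_] := hd _ _ _ _ vr vs eq_rs; lia.
Qed.

Lemma card_DAG_nodes_le : 0 < n -> 0 < k ->
  #|DAG_nodes n k A| <= \sum_(1 <= a < n.+1) \sum_(1 <= b < n.+1) flanked a b.
Proof.
move=> hn hk; rewrite -sum1_card.
apply: (@leq_trans (\sum_(x : label n) flanked (val x.1) (val x.2))).
  by rewrite big_mkcond; apply: leq_sum => x _; case: ifP => // /flanked_DAG_nodes ->.
rewrite -(pair_bigA _ (fun i j : 'I_n.+1 => (flanked i j : nat))) /=.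
rewrite -(big_mkord xpredT (fun a => \sum_(b < n.+1) (flanked a b : nat))) big_ltn //.
rewrite big1 ?add0n => [|b _]; last by rewrite /flanked.
apply: leq_sum => a _.
by rewrite -(big_mkord xpredT (fun b => (flanked a b : nat))) big_ltn // /flanked; case: (a : nat).
Qed.
End TopkDAG.

Theorem lemma5 (disp : Order.disp_t) (T : orderType disp)
  (n k : nat) (A : nat -> nat -> T) :
  0 < n -> 1 <= k -> distinct_entries n A ->
  #|DAG_nodes n k A| <= 6 * k * n.
Proof.
move=> hn hk hd; apply: leq_trans (card_DAG_nodes_le A hn hk) _.
apply: leq_trans; first by apply: leq_sum => a _; apply: leq_sum => b _; exact: flanked_le.
under eq_bigr do rewrite !big_split /=.
rewrite !big_split /=.
have left_end : \sum_(1 <= a < n.+1) \sum_(1 <= b < n.+1) (a == 1) <= (n.+1 - 1) * 1.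
  by rewrite exchange_big; apply: leq_sum_const_nat => b _; exact: sum_nat_eq_le1.
have right_end : \sum_(1 <= a < n.+1) \sum_(1 <= b < n.+1) (b == n) <= (n.+1 - 1) * 1.
  by apply: leq_sum_const_nat => a _; exact: sum_nat_eq_le1.
have pushed_right : \sum_(1 <= a < n.+1) \sum_(1 <= b < n.+1)
    \sum_(1 <= r < 3) topk_pushed_right k A a.-1 b r a.-1 <= (n.+1 - 1) * ((3 - 1) * k).
  apply: leq_sum_const_nat => a _; rewrite exchange_big.
  by apply: leq_sum_const_nat => r _; exact: sum_topk_pushed_right.
have pushed_left : \sum_(1 <= a < n.+1) \sum_(1 <= b < n.+1)
    \sum_(1 <= s < 3) topk_pushed_left k A a b.+1 s b.+1 <= (n.+1 - 1) * ((3 - 1) * k).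
  rewrite exchange_big; apply: leq_sum_const_nat => b _; rewrite exchange_big.
  by apply: leq_sum_const_nat => s _; exact: sum_topk_pushed_left.
nia.
Qed.
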